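(* Let $p$ be a rational prime with $p\equiv1\pmod 8$. Then there exist positive integers $a,b$ with $p=(a+b\sqrt2)(a-b\sqrt2)$, and for such $a,b$ there exists $\alpha\in\mathbb{Z}[\zeta_8]$ such that $$a+b\sqrt2=\sigma_1(\alpha)\sigma_7(\alpha),\qquad a-b\sqrt2=\sigma_3(\alpha)\sigma_5(\alpha),$$ and $$\|\Sigma_{\mathbb{Q}(\zeta_8)}(\alpha)\|^2=2\sigma_1(\alpha)\sigma_7(\alpha)+2\sigma_3(\alpha)\sigma_5(\alpha)=4a.$$
   Context: $\zeta_8=e^{2\pi i/8}$, $\sqrt2=\zeta_8+\zeta_8^{7}$. For $i\in\{1,3,5,7\}$, $\sigma_i$ is the automorphism of $\mathbb{Q}(\zeta_8)$ with $\sigma_i(\zeta_8)=\zeta_8^i$. The canonical embedding norm is $\|\Sigma_{\mathbb{Q}(\zeta_8)}(x)\|^2=\sum_{i\in\{1,3,5,7\}}|\sigma_i(x)|^2$. *)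

From mathcomp Require Import all_boot all_order all_algebra all_field.
Set Implicit Arguments. Unset Strict Implicit. Unset Printing Implicit Defensive.
Import Order.TTheory GRing.Theory Num.Theory.
Local Open Scope ring_scope.

(* zeta_8 = e^{2 pi i/8} = (sqrt 2 / 2) (1 + i), as an element of algC. *)
Definition zeta8 : algC := sqrtC 2 / 2 * (1 + 'i).

Definition sqrt2 : algC := zeta8 + zeta8 ^+ 7.

(* An element of Z[zeta_8] is c_0 + c_1 z + c_2 z^2 + c_3 z^3 with c_k in Z
   ({1,z,z^2,z^3} is a Z-basis).  The embedding/automorphism sigma_i sends
   zeta_8 to zeta_8^i, hence acts on coefficient vectors as below. *)
Definition zelt (c : 'I_4 -> int) : algC :=
  \sum_(k < 4) (c k)%:~R * zeta8 ^+ k.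

Definition sigma (i : nat) (c : 'I_4 -> int) : algC :=
  \sum_(k < 4) (c k)%:~R * zeta8 ^+ (i * k).

Definition canon_norm2 (c : 'I_4 -> int) : algC :=
  \sum_(i <- [:: 1; 3; 5; 7]%N) `|sigma i c| ^+ 2.

From HB Require Import structures.
From mathcomp Require Import all_boot all_order all_algebra all_field.
From mathcomp Require Import ring zify.
Import Order.TTheory GRing.Theory Num.Theory.
Local Open Scope ring_scope.

(* Let pi = a + b sqrt2, a totally positive element of Z[sqrt2] of norm p, and z a
   root of X^4 + 1 modulo p with pi(z) = 0.  As Z[zeta8] is norm-Euclidean, the gcd g
   of pi and zeta8 - z has norm p, so g sigma7(g) is a totally positive generator of
   the prime ideal (pi) of Z[sqrt2].  The quotient of pi by g sigma7(g) is a totally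
   positive unit, hence the square of a unit eps (descent on Pell's equation), and
   alpha = g eps satisfies alpha sigma7(alpha) = pi.  The existence of a and b is
   Thue's lemma applied to the square root z - z^3 of 2 modulo p. *)

Lemma sqrt2_irrational {x y : int} : x ^+ 2 = 2 * y ^+ 2 -> y = 0.
Proof.
move=> /(congr1 absz); rewrite abszM !abszX => e.
apply/eqP; rewrite -absz_eq0; apply/eqP.
move: e; set m := `|x|%N; set n := `|y|%N => e.
have [// | n_gt0] := posnP n; have m_gt0 : (0 < m)%N by nia.
have := congr1 (logn 2) e.
by rewrite lognM ?expn_gt0 ?n_gt0 // !lognX (@logn_prime 2 2) //=; lia.
Qed.

Lemma exists_floor_sqrt n : exists m, (m ^ 2 <= n < m.+1 ^ 2)%N.
Proof.
elim: n => [|n [m /andP[m_le n_lt]]]; first by exists 0%N.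
have [n1_lt | m1_le] := ltnP n.+1 (m.+1 ^ 2); first by exists m; rewrite n1_lt andbT ltnW.
by exists m.+1; rewrite m1_le /=; nia.
Qed.

Lemma pell_sqr {u v : int} : 0 < u -> u ^+ 2 - 2 * v ^+ 2 = 1 ->
  exists e f : int, u = e ^+ 2 + 2 * f ^+ 2 /\ v = 2 * e * f.
Proof.
have [n] := ubnP `|v|%N; elim: n u v => // n IH u v lt_vn u_gt0 uv1.
have [v0 | v_neq0] := eqVneq v 0.
  have /eqP : u ^+ 2 = 1 by move: uv1; rewrite v0 expr0n /= mulr0 subr0.
  rewrite sqrf_eq1 => /orP[/eqP-> | /eqP u_eq]; last by rewrite u_eq in u_gt0.
  by exists 1, 0; rewrite v0; split; ring.
wlog v_gt0 : v lt_vn uv1 v_neq0 / 0 < v.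
  move=> gen; case: (ltgtP v 0) => [v_lt0 | v_gt0 | v0]; last 1 first.
  - by rewrite v0 eqxx in v_neq0.
  - have := gen (- v); rewrite abszN sqrrN oppr_eq0 oppr_gt0.
    case/(_ lt_vn uv1 v_neq0 v_lt0) => e [f [ue vf]].
    by exists e, (- f); rewrite ue -[v]opprK vf; split; ring.
  - exact: gen.
have v_lt_u : v < u by nia.
have u_lt_2v : u < 2 * v by nia.
have v4_lt_u3 : 4 * v < 3 * u by nia.
(* descend along multiplication by the unit 3 - 2 sqrt2 *)
have [|||e [f [ue vf]]] := IH (3 * u - 4 * v) (3 * v - 2 * u).
- lia.
- lia.
- by rewrite -[RHS]uv1; ring.
exists (e + 2 * f), (e + f); split.
  have -> : u = 3 * (3 * u - 4 * v) + 4 * (3 * v - 2 * u) by ring.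
  by rewrite ue vf; ring.
have -> : v = 2 * (3 * u - 4 * v) + 3 * (3 * v - 2 * u) by ring.
by rewrite ue vf; ring.
Qed.

(** * The ring Z[zeta8] *)

(* Coordinates in the basis 1, zeta, zeta^2, zeta^3, multiplied using zeta^4 = -1. *)
Record cyc8 := Cyc8 { cf0 : int; cf1 : int; cf2 : int; cf3 : int }.

Definition cyc8_tuple x := (cf0 x, cf1 x, cf2 x, cf3 x).
Definition tuple_cyc8 (t : int * int * int * int) :=
  let: (a, b, c, d) := t in Cyc8 a b c d.
Lemma cyc8_tupleK : cancel cyc8_tuple tuple_cyc8. Proof. by case. Qed.
HB.instance Definition _ := Choice.copy cyc8 (can_type cyc8_tupleK).

Definition cyc8_add x y :=
  Cyc8 (cf0 x + cf0 y) (cf1 x + cf1 y) (cf2 x + cf2 y) (cf3 x + cf3 y).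
Definition cyc8_opp x := Cyc8 (- cf0 x) (- cf1 x) (- cf2 x) (- cf3 x).
Definition cyc8_mul x y :=
  Cyc8 (cf0 x * cf0 y - cf1 x * cf3 y - cf2 x * cf2 y - cf3 x * cf1 y)
       (cf0 x * cf1 y + cf1 x * cf0 y - cf2 x * cf3 y - cf3 x * cf2 y)
       (cf0 x * cf2 y + cf1 x * cf1 y + cf2 x * cf0 y - cf3 x * cf3 y)
       (cf0 x * cf3 y + cf1 x * cf2 y + cf2 x * cf1 y + cf3 x * cf0 y).

Ltac cyc8_congr :=
  repeat match goal with x : cyc8 |- _ => case: x => ? ? ? ? end;
  rewrite /= /cyc8_add /cyc8_opp /cyc8_mul /=; congr Cyc8; ring.

Lemma cyc8_addA : associative cyc8_add. Proof. move=> *; cyc8_congr. Qed.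
Lemma cyc8_addC : commutative cyc8_add. Proof. move=> *; cyc8_congr. Qed.
Lemma cyc8_add0 : left_id (Cyc8 0 0 0 0) cyc8_add. Proof. move=> *; cyc8_congr. Qed.
Lemma cyc8_addN : left_inverse (Cyc8 0 0 0 0) cyc8_opp cyc8_add.
Proof. move=> *; cyc8_congr. Qed.
HB.instance Definition _ :=
  GRing.isZmodule.Build cyc8 cyc8_addA cyc8_addC cyc8_add0 cyc8_addN.

Lemma cyc8_mulA : associative cyc8_mul. Proof. move=> *; cyc8_congr. Qed.
Lemma cyc8_mulC : commutative cyc8_mul. Proof. move=> *; cyc8_congr. Qed.
Lemma cyc8_mul1 : left_id (Cyc8 1 0 0 0) cyc8_mul. Proof. move=> *; cyc8_congr. Qed.
Lemma cyc8_mulD : left_distributive cyc8_mul cyc8_add.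
Proof. move=> *; cyc8_congr. Qed.
Lemma cyc8_one_neq0 : Cyc8 1 0 0 0 != 0. Proof. by []. Qed.
HB.instance Definition _ := GRing.Zmodule_isComNzRing.Build cyc8
  cyc8_mulA cyc8_mulC cyc8_mul1 cyc8_mulD cyc8_one_neq0.

Lemma cyc8_addE x y : x + y =
  Cyc8 (cf0 x + cf0 y) (cf1 x + cf1 y) (cf2 x + cf2 y) (cf3 x + cf3 y).
Proof. by []. Qed.

Lemma cyc8_oppE x : - x = Cyc8 (- cf0 x) (- cf1 x) (- cf2 x) (- cf3 x).
Proof. by []. Qed.

Lemma cyc8_mulE x y : x * y = cyc8_mul x y.
Proof. by []. Qed.

Lemma intr_cyc8 (n : int) : n%:~R = Cyc8 n 0 0 0.
Proof.
have natE k : k%:R = Cyc8 k 0 0 0.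
  by elim: k => // k IH; rewrite mulrS IH cyc8_addE /=; congr Cyc8; lia.
case: n => k; first exact: natE.
by rewrite NegzE mulrNz -pmulrn natE cyc8_oppE /=; congr Cyc8; lia.
Qed.

Ltac cyc8_compute :=
  rewrite ?intr_cyc8 ?cyc8_addE ?cyc8_oppE ?cyc8_mulE /cyc8_mul /=;
  congr Cyc8; ring.

Definition zeta : cyc8 := Cyc8 0 1 0 0.

Lemma zeta4 : zeta ^+ 4 = -1. Proof. by []. Qed.

Lemma zetaX4 k : odd k -> (zeta ^+ k) ^+ 4 = -1.
Proof. by move=> k_odd; rewrite exprAC zeta4 -signr_odd k_odd. Qed.

Definition sqrt2_8 : cyc8 := zeta - zeta ^+ 3.

Lemma sqrt2_8_sqr : sqrt2_8 ^+ 2 = 2.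
Proof. by []. Qed.

Lemma sqrt2_8E (a b : int) : a%:~R + b%:~R * sqrt2_8 = Cyc8 a b 0 (- b).
Proof. by rewrite (_ : sqrt2_8 = Cyc8 0 1 0 (-1)) //; cyc8_compute. Qed.

Lemma mul_sqrt2_8 (a b c d : int) :
  (a%:~R + b%:~R * sqrt2_8) * (c%:~R + d%:~R * sqrt2_8)
  = (a * c + 2 * b * d)%:~R + (a * d + b * c)%:~R * sqrt2_8.
Proof.
transitivity (a%:~R * c%:~R + b%:~R * d%:~R * sqrt2_8 ^+ 2
  + (a%:~R * d%:~R + b%:~R * c%:~R) * sqrt2_8 : cyc8); first by ring.
by rewrite sqrt2_8_sqr; ring.
Qed.

Section Evaluation.
Variables (R : comNzRingType) (w : R).

Definition ev8 (x : cyc8) : R :=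
  (cf0 x)%:~R + (cf1 x)%:~R * w + (cf2 x)%:~R * w ^+ 2 + (cf3 x)%:~R * w ^+ 3.

Lemma ev8B : {morph ev8 : x y / x - y}.
Proof. by case=> a b c d [e f g h]; rewrite /ev8 /= !intrB; ring. Qed.

HB.instance Definition _ := GRing.isZmodMorphism.Build cyc8 R ev8 ev8B.

Lemma ev8_int (n : int) : ev8 n%:~R = n%:~R.
Proof. by rewrite intr_cyc8 /ev8 /=; ring. Qed.

Lemma ev8_1 : ev8 1 = 1.
Proof. by rewrite /ev8 /=; ring. Qed.

Lemma ev8_zeta : ev8 zeta = w.
Proof. by rewrite /ev8 /=; ring. Qed.

Lemma ev8_sqrt2_8 (a b : int) :
  ev8 (a%:~R + b%:~R * sqrt2_8) = a%:~R + b%:~R * (w - w ^+ 3).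
Proof. by rewrite sqrt2_8E /ev8 /=; ring. Qed.

Hypothesis w4 : w ^+ 4 = -1.

Lemma ev8M : {morph ev8 : x y / x * y}.
Proof.
case=> a b c d [e f g h]; apply/eqP; rewrite -subr_eq0 /ev8 /= !(intrD, intrB, intrM).
(* the two sides differ by a multiple of w ^+ 4 + 1 *)
apply/eqP; transitivity (- (w ^+ 4 + 1) * ((b * h + c * g + d * f)%:~R
  + (c * h + d * g)%:~R * w + (d * h)%:~R * w ^+ 2)); first by ring.
by rewrite w4 addNr oppr0 mul0r.
Qed.

Lemma ev8X x n : ev8 (x ^+ n) = ev8 x ^+ n.
Proof. by elim: n => [|n IH]; rewrite ?ev8_1 // !exprS ev8M IH. Qed.

Lemma sqrt2_of_X4 : (w - w ^+ 3) ^+ 2 = 2.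
Proof.
transitivity ((w ^+ 4 + 1) * (w ^+ 2 - 2) + 2); first by ring.
by rewrite w4 addNr mul0r add0r.
Qed.

Lemma ev8_sqrt2_8_opp (a b : int) :
  ev8 (a%:~R + b%:~R * sqrt2_8) * (a%:~R + b%:~R * (- w - (- w) ^+ 3))
  = (a ^+ 2 - 2 * b ^+ 2)%:~R.
Proof.
rewrite ev8_sqrt2_8; transitivity (a%:~R ^+ 2 - b%:~R ^+ 2 * (w - w ^+ 3) ^+ 2 : R).
  by ring.
by rewrite sqrt2_of_X4; ring.
Qed.

End Evaluation.

Arguments ev8 {R} w x.
Arguments ev8M {R w}.
Arguments ev8X {R w}.
Arguments sqrt2_of_X4 {R w}.
Arguments ev8_sqrt2_8 {R}.
Arguments ev8_sqrt2_8_opp {R w}.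

Lemma ev8_comp {R : comNzRingType} (w : R) (v x : cyc8) : w ^+ 4 = -1 ->
  ev8 w (ev8 v x) = ev8 (ev8 w v) x.
Proof. by move=> w4; rewrite [ev8 v x]/ev8 !raddfD /= !(ev8M w4) !ev8_int. Qed.

Definition aut8 (k : nat) : cyc8 -> cyc8 := ev8 (zeta ^+ k).

Lemma ev8_aut8 {R : comNzRingType} (w : R) k x : w ^+ 4 = -1 ->
  ev8 w (aut8 k x) = ev8 (w ^+ k) x.
Proof. by move=> w4; rewrite ev8_comp // ev8X // ev8_zeta. Qed.

Lemma aut8M k : odd k -> {morph aut8 k : x y / x * y}.
Proof. by move=> k_odd x y; rewrite /aut8 ev8M // zetaX4. Qed.

Lemma aut8_1 x : aut8 1 x = x.
Proof.
case: x => a b c d; rewrite /aut8 expr1 /ev8 (_ : zeta ^+ 2 = Cyc8 0 0 1 0) //.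
by rewrite (_ : zeta ^+ 3 = Cyc8 0 0 0 1) //; cyc8_compute.
Qed.

Lemma aut8_7E x : aut8 7 x = Cyc8 (cf0 x) (- cf3 x) (- cf2 x) (- cf1 x).
Proof.
case: x => a b c d; rewrite /aut8 /ev8 (_ : zeta ^+ 7 ^+ 2 = Cyc8 0 0 (-1) 0) //.
rewrite (_ : zeta ^+ 7 ^+ 3 = Cyc8 0 (-1) 0 0) // (_ : zeta ^+ 7 = Cyc8 0 0 0 (-1)) //.
cyc8_compute.
Qed.

Lemma aut8_3_7 x : aut8 3 (aut8 7 x) = aut8 5 x.
Proof.
rewrite /aut8 ev8_aut8; last exact: zetaX4.
by rewrite -exprM (exprD _ 16 5) (exprM _ 8 2) (_ : zeta ^+ 8 = 1) // expr1n mul1r.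
Qed.

Lemma aut8_3_sqrt2_8 (a b : int) :
  aut8 3 (a%:~R + b%:~R * sqrt2_8) = a%:~R + (- b)%:~R * sqrt2_8.
Proof.
rewrite /aut8 ev8_sqrt2_8 (_ : zeta ^+ 3 - zeta ^+ 3 ^+ 3 = - sqrt2_8) //.
by rewrite mulrN -mulNr intrN.
Qed.

Lemma aut8_7_sqrt2_8 (a b : int) :
  aut8 7 (a%:~R + b%:~R * sqrt2_8) = a%:~R + b%:~R * sqrt2_8.
Proof. by rewrite /aut8 ev8_sqrt2_8 (_ : zeta ^+ 7 - zeta ^+ 7 ^+ 3 = sqrt2_8). Qed.

(** * Norms and Euclidean division *)

Definition relnorm0 x := cf0 x ^+ 2 + cf1 x ^+ 2 + cf2 x ^+ 2 + cf3 x ^+ 2.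
Definition relnorm1 x :=
  cf0 x * cf1 x + cf1 x * cf2 x + cf2 x * cf3 x - cf3 x * cf0 x.

Lemma mul_aut8_7 x :
  x * aut8 7 x = (relnorm0 x)%:~R + (relnorm1 x)%:~R * sqrt2_8.
Proof.
by case: x => a b c d; rewrite aut8_7E sqrt2_8E /relnorm0 /relnorm1; cyc8_compute.
Qed.

Definition norm8 x := relnorm0 x ^+ 2 - 2 * relnorm1 x ^+ 2.

Definition adj8 x := aut8 3 x * aut8 5 x * aut8 7 x.

Lemma mul_adj8 x : x * adj8 x = (norm8 x)%:~R.
Proof.
have -> : x * adj8 x = x * aut8 7 x * (aut8 3 x * aut8 5 x) by rewrite /adj8; ring.
rewrite -aut8_3_7 -aut8M // mul_aut8_7 aut8_3_sqrt2_8 mul_sqrt2_8 /norm8.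
by rewrite (_ : _ * - _ + _ = 0) ?mul0r ?addr0; ring.
Qed.

Lemma ev8_adj8 {R : comNzRingType} (w : R) x : w ^+ 4 = -1 ->
  ev8 w x * ev8 w (adj8 x) = (norm8 x)%:~R.
Proof. by move=> w4; rewrite -ev8M // mul_adj8 ev8_int. Qed.

Lemma norm8M x y : norm8 (x * y) = norm8 x * norm8 y.
Proof.
case: x y => [a b c d] [e f g h].
by rewrite /norm8 /relnorm0 /relnorm1 cyc8_mulE /cyc8_mul /=; ring.
Qed.

Lemma norm8_int (n : int) : norm8 n%:~R = n ^+ 4.
Proof. by rewrite intr_cyc8 /norm8 /relnorm0 /relnorm1 /=; ring. Qed.

Lemma norm8_sqrt2_8 (a b : int) :
  norm8 (a%:~R + b%:~R * sqrt2_8) = (a ^+ 2 - 2 * b ^+ 2) ^+ 2.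
Proof. by rewrite sqrt2_8E /norm8 /relnorm0 /relnorm1 /=; ring. Qed.

Lemma norm8_ge0 x : 0 <= norm8 x.
Proof.
case: x => a b c d; rewrite /norm8 /relnorm0 /relnorm1 /= subr_ge0.
set t := a * b + b * c + c * d - d * a.
set X := b ^+ 2 + d ^+ 2; set Y := a ^+ 2 + c ^+ 2.
have cauchy_schwarz : t ^+ 2 <= 2 * (X * Y).
  have -> : 2 * (X * Y) = t ^+ 2 + (b * (c - a) - d * (a + c)) ^+ 2.
    by rewrite /t /X /Y; ring.
  by rewrite lerDl sqr_ge0.
have am_gm : 4 * (X * Y) <= (a ^+ 2 + b ^+ 2 + c ^+ 2 + d ^+ 2) ^+ 2.
  have -> : (a ^+ 2 + b ^+ 2 + c ^+ 2 + d ^+ 2) ^+ 2 = 4 * (X * Y) + (X - Y) ^+ 2.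
    by rewrite /X /Y; ring.
  by rewrite lerDl sqr_ge0.
move: cauchy_schwarz am_gm; generalize (t ^+ 2) (X * Y); lia.
Qed.

Lemma norm8_eq0 x : (norm8 x == 0) = (x == 0).
Proof.
apply/eqP/eqP => [|->] //; case: x => a b c d.
rewrite /norm8 /relnorm0 /relnorm1 /= => /eqP; rewrite subr_eq0 => /eqP e.
have r1 := sqrt2_irrational e; rewrite r1 expr0n mulr0 /= in e.
move/eqP: e; rewrite sqrf_eq0 !paddr_eq0 ?addr_ge0 ?sqr_ge0 // !sqrf_eq0.
by case/andP=> /andP[/andP[/eqP-> /eqP->] /eqP->] /eqP->.
Qed.

Lemma norm8_le_sqr x : norm8 x <= relnorm0 x ^+ 2.
Proof. by rewrite /norm8 gerBl mulr_ge0 ?sqr_ge0. Qed.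

Lemma centered_sqr_le {n c : int} : - n <= 2 * c < n ->
  4 * c ^+ 2 <= n ^+ 2 /\ (2 * c != - n -> 4 * c ^+ 2 < n ^+ 2).
Proof.
move=> /andP[lo hi]; split=> [|ne]; first by nia.
have {}lo : - n < 2 * c by rewrite lt_neqAle eq_sym ne.
nia.
Qed.

Lemma norm8_lt_centered (n : int) (r : cyc8) : 0 < n ->
  - n <= 2 * cf0 r < n -> - n <= 2 * cf1 r < n ->
  - n <= 2 * cf2 r < n -> - n <= 2 * cf3 r < n -> norm8 r < n ^+ 4.
Proof.
case: r => a b c d n_gt0 /= ha hb hc hd.
(* relnorm0 r reaches n ^+ 2 only if all coordinates are - n / 2 *)
have [all_eq | not_all] :=
  boolP [&& 2 * a == - n, 2 * b == - n, 2 * c == - n & 2 * d == - n].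
  case/and4P: all_eq => /eqP ea /eqP eb /eqP ec /eqP ed {ha hb hc hd}.
  have [-> -> -> ->] : [/\ b = a, c = a, d = a & n = - (2 * a)] by split; lia.
  have a4_gt0 : 0 < a ^+ 4 by rewrite exprn_even_gt0 //=; lia.
  rewrite /norm8 /relnorm0 /relnorm1 /=.
  have -> : (- (2 * a)) ^+ 4 = 16 * a ^+ 4 by ring.
  have -> : (a ^+ 2 + a ^+ 2 + a ^+ 2 + a ^+ 2) ^+ 2
      - 2 * (a * a + a * a + a * a - a * a) ^+ 2 = 8 * a ^+ 4 by ring.
  lia.
have rn0_lt : relnorm0 (Cyc8 a b c d) < n ^+ 2.
  have [la sa] := centered_sqr_le ha; have [lb sb] := centered_sqr_le hb.
  have [lc sc] := centered_sqr_le hc; have [ld sd] := centered_sqr_le hd.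
  rewrite /relnorm0 /=; move: not_all; rewrite !negb_and.
  by case/or4P=> [/sa | /sb | /sc | /sd]; clear sa sb sc sd; lia.
apply: le_lt_trans (norm8_le_sqr _) _.
have rn0_ge0 : 0 <= relnorm0 (Cyc8 a b c d) by rewrite /relnorm0 /= !addr_ge0 ?sqr_ge0.
by rewrite (_ : 4 = 2 * 2)%N // exprM ltrXn2r.
Qed.

Definition round_div (x n : int) : int := ((2 * x + n) %/ (2 * n))%Z.

Lemma round_div_centered (x n : int) : 0 < n ->
  - n <= 2 * (x - round_div x n * n) < n.
Proof.
move=> n_gt0; rewrite /round_div.
have n2_gt0 : 0 < 2 * n by rewrite mulr_gt0.
have := divz_eq (2 * x + n) (2 * n).
have := modz_ge0 (2 * x + n) (lt0r_neq0 n2_gt0).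
have := ltz_pmod (2 * x + n) n2_gt0.
move: (_ %/ _)%Z (_ %% _)%Z => q m m_lt m_ge0 e.
apply/andP; split; lia.
Qed.

Lemma cyc8_round (e : cyc8) {n : int} : 0 < n ->
  exists q, norm8 (e - q * n%:~R) < n ^+ 4.
Proof.
case: e => e0 e1 e2 e3 n_gt0.
exists (Cyc8 (round_div e0 n) (round_div e1 n) (round_div e2 n) (round_div e3 n)).
apply: norm8_lt_centered; rewrite // intr_cyc8 cyc8_mulE /cyc8_mul /=;
  by rewrite !(mulr0, subr0, add0r) round_div_centered.
Qed.

Lemma cyc8_euclid (c d : cyc8) : 0 < norm8 d ->
  exists q, norm8 (c - q * d) < norm8 d.
Proof.
move=> n_gt0; have [q q_lt] := cyc8_round (c * adj8 d) n_gt0; exists q.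
have norm_adj : norm8 d * norm8 (adj8 d) = norm8 d ^+ 4.
  by rewrite -norm8M mul_adj8 norm8_int.
have adj_gt0 : 0 < norm8 (adj8 d).
  by rewrite -(ltr_pM2l n_gt0) mulr0 norm_adj exprn_gt0.
rewrite -(ltr_pM2r adj_gt0) -norm8M norm_adj.
by rewrite (_ : (c - q * d) * adj8 d = c * adj8 d - q * (norm8 d)%:~R) // -mul_adj8; ring.
Qed.

Definition dvd8 (g x : cyc8) := exists k, x = g * k.

Lemma cyc8_bezout (x y : cyc8) :
  exists g, [/\ exists u v, g = x * u + y * v, dvd8 g x & dvd8 g y].
Proof.
have [n] := ubnP `|norm8 y|%N; elim: n x y => // n IH x y lt_yn.
have [y0 | y_neq0] := eqVneq y 0.
  by exists x; rewrite y0; split; [exists 1, 0 | exists 1 | exists 0]; ring.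
have ny_gt0 : 0 < norm8 y by rewrite lt_def norm8_eq0 y_neq0 norm8_ge0.
have [q r_lt] := cyc8_euclid x y ny_gt0.
have [|g [[u [v g_def]] [k1 yk1] [k2 rk2]]] := IH y (x - q * y).
  by have := norm8_ge0 (x - q * y); lia.
exists g; split; first by exists v, (u - q * v); rewrite g_def; ring.
  by exists (k2 + q * k1); rewrite mulrDr mulrCA -yk1 -rk2; ring.
by exists k1.
Qed.

(* Two totally positive elements of Z[sqrt2] of the same prime norm n generating
   the same ideal differ by a totally positive unit, which is a square. *)
Lemma sqrt2_assoc_sqr {n a b A B : int} : 0 < n -> 0 < a -> 0 < A ->
  a ^+ 2 - 2 * b ^+ 2 = n -> A ^+ 2 - 2 * B ^+ 2 = n ->
  (n %| A * a - 2 * B * b)%Z -> (n %| B * a - A * b)%Z ->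
  exists e f : int, a%:~R + b%:~R * sqrt2_8
    = (A%:~R + B%:~R * sqrt2_8) * (e%:~R + f%:~R * sqrt2_8) ^+ 2.
Proof.
move=> n_gt0 a_gt0 A_gt0 nab nAB /dvdzP[u u_def] /dvdzP[v v_def].
have n_neq0 : n != 0 by rewrite lt0r_neq0.
have uv1 : u ^+ 2 - 2 * v ^+ 2 = 1.
  apply: (mulIf (expf_neq0 2 n_neq0)); rewrite mul1r.
  transitivity ((u * n) ^+ 2 - 2 * (v * n) ^+ 2); first by ring.
  rewrite -u_def -v_def.
  transitivity ((A ^+ 2 - 2 * B ^+ 2) * (a ^+ 2 - 2 * b ^+ 2)); first by ring.
  by rewrite nab nAB.
have u_gt0 : 0 < u.
  have a2 : a ^+ 2 = n + 2 * b ^+ 2 by rewrite -nab; ring.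
  have A2 : A ^+ 2 = n + 2 * B ^+ 2 by rewrite -nAB; ring.
  have sq : (2 * B * b) ^+ 2 < (A * a) ^+ 2.
    rewrite -subr_gt0 (_ : _ - _ = n ^+ 2 + 2 * n * (B ^+ 2 + b ^+ 2)).
      by rewrite ltr_wpDr ?exprn_gt0 // !mulr_ge0 ?addr_ge0 ?sqr_ge0 // ltW.
    by rewrite !exprMn a2 A2; ring.
  have lt_Aa : 2 * B * b < A * a.
    have [Bb_le0 | Bb_gt0] := lerP (2 * B * b) 0.
      by rewrite (le_lt_trans Bb_le0) // mulr_gt0.
    have Aa_gt0 : 0 < A * a by rewrite mulr_gt0.
    by rewrite -ltr_sqr // nnegrE; apply: ltW.
  by rewrite -(pmulr_lgt0 _ n_gt0) -u_def subr_gt0.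
have [e [f [ue vf]]] := pell_sqr u_gt0 uv1.
have AB : A%:~R + B%:~R * sqrt2_8
    = (a%:~R + b%:~R * sqrt2_8) * (u%:~R + v%:~R * sqrt2_8).
  rewrite mul_sqrt2_8; congr (_%:~R + _%:~R * _); apply: (mulIf n_neq0).
    by rewrite mulrDl -!mulrA -u_def -v_def -[in LHS]nab; ring.
  by rewrite mulrDl -!mulrA -u_def -v_def -[in LHS]nab; ring.
have ef1 : (e ^+ 2 - 2 * f ^+ 2) ^+ 2 = 1 by rewrite -[RHS]uv1 ue vf; ring.
have unit : (u%:~R + v%:~R * sqrt2_8) * (e%:~R + (- f)%:~R * sqrt2_8) ^+ 2 = 1.
  have -> : u%:~R + v%:~R * sqrt2_8 = (e%:~R + f%:~R * sqrt2_8) ^+ 2.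
    by rewrite expr2 mul_sqrt2_8 ue vf; congr (_%:~R + _%:~R * _); ring.
  rewrite -exprMn mul_sqrt2_8 (_ : e * - f + f * e = 0) ?mul0r ?addr0; last by ring.
  by transitivity (((e ^+ 2 - 2 * f ^+ 2) ^+ 2)%:~R : cyc8); [ring | rewrite ef1].
by exists e, (- f); rewrite AB -mulrA unit mulr1.
Qed.

(** * Arithmetic modulo p *)

Section PrimeField.
Context {p : nat} (p_pr : prime p).

Lemma exists_Fp_X4_eqN1 : (p %% 8 = 1)%N -> exists z : 'F_p, z ^+ 4 = -1.
Proof.
move=> p_mod8; set k := (p %/ 8)%N.
have p_def : p = (8 * k).+1 by move: (divn_eq p 8); rewrite p_mod8 -/k; lia.
have k_gt0 : (0 < k)%N by move: (prime_gt1 p_pr); rewrite p_def; lia.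
(* X^(4k) - 1 has at most 4k < p - 1 roots, so some nonzero g has g^(4k) = -1 *)
have [g /andP[g_neq0 g4k]] : exists g : 'F_p, (g != 0) && (g ^+ (4 * k) != 1).
  apply/existsP; apply: contraT => /existsPn all_roots.
  have roots : all (4 * k).-unity_root (enum (predC1 (0 : 'F_p))).
    apply/allP => x; rewrite mem_enum inE => x_neq0.
    by have := all_roots x; rewrite x_neq0 /= negbK unity_rootE.
  have := max_unity_roots (n := 4 * k) _ roots (enum_uniq _).
  by rewrite -cardE cardC1 card_Fp // p_def /=; lia.
exists (g ^+ k); rewrite -exprM mulnC.
have g8k : g ^+ (8 * k) = 1.
  apply: (mulfI g_neq0); rewrite mulr1 -exprS -p_def.
  by rewrite -[in RHS](expf_card g) card_Fp.
have : (g ^+ (4 * k)) ^+ 2 == 1 by rewrite -exprM mulnAC g8k.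
by rewrite sqrf_eq1 (negbTE g4k) => /eqP.
Qed.

Lemma thue_lemma (s : 'F_p) : exists u v : int,
  [/\ (u, v) != (0, 0), u ^+ 2 < p%:Z, v ^+ 2 < p%:Z & u%:~R = s * v%:~R].
Proof.
have [m /andP[m_le p_lt]] := exists_floor_sqrt p.
have {m_le} m_lt : (m ^ 2 < p)%N.
  rewrite ltn_neqAle m_le andbT; apply/eqP => p_sq.
  move: p_pr; rewrite -p_sq => /primeP[m2_gt1 /(_ m)].
  by rewrite expnS expn1 dvdn_mulr //= => /(_ isT) /orP[] /eqP; nia.
pose f (x : 'I_m.+1 * 'I_m.+1) : 'F_p := x.1%:R - s * x.2%:R.
have /injectivePn[[i1 j1] [[i2 j2] neq f_eq]] : ~~ injectiveb f.
  have cardF := card_Fp p_pr; rewrite card_ord in cardF.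
  by apply/injectiveP => /leq_card; rewrite card_prod !card_ord cardF; nia.
move: (ltn_ord i1) (ltn_ord i2) (ltn_ord j1) (ltn_ord j2) => i1_le i2_le j1_le j2_le.
exists (i1%:Z - i2%:Z), (j1%:Z - j2%:Z); split.
- apply: contraNneq neq => -[/eqP + /eqP +]; rewrite !subr_eq0 => /eqP ei /eqP ej.
  by apply/eqP; congr pair; apply: val_inj => /=; lia.
- nia.
- nia.
- by rewrite -[LHS]subr0 -(subrr (f (i2, j2))) -{1}f_eq /f /= !intrB; ring.
Qed.

Lemma sqrt2_mod_norm_form {s : 'F_p} : s ^+ 2 = 2 ->
  exists a b : nat, [/\ 0 < a, 0 < b & a ^ 2 = p + 2 * b ^ 2]%N.
Proof.
move=> s2; have [u [v [uv_neq0 u2_lt v2_lt uv_eq]]] := thue_lemma s.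
have p_dvd : (p %| u ^+ 2 - 2 * v ^+ 2)%Z.
  rewrite (dvdz_pcharf (pchar_Fp p_pr)); apply/eqP.
  transitivity (u%:~R ^+ 2 - 2 * v%:~R ^+ 2 : 'F_p); first by ring.
  by rewrite uv_eq -s2; ring.
have v_neq0 : v != 0.
  apply: contraNneq uv_neq0 => v0; rewrite v0 mulr0 in uv_eq.
  have : (p %| u)%Z by rewrite (dvdz_pcharf (pchar_Fp p_pr)) uv_eq.
  case/dvdzP => k u_def; rewrite v0 u_def (_ : k = 0) ?mul0r //.
  by move: u2_lt; rewrite u_def; nia.
have norm_uv : u ^+ 2 - 2 * v ^+ 2 = - p%:Z.
  case/dvdzP: p_dvd => k k_def.
  have [k0 | k1] : k = 0 \/ k = -1 by nia.
  - move: k_def; rewrite k0 mul0r => /eqP; rewrite subr_eq0 => /eqP /sqrt2_irrational v0.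
    by rewrite v0 eqxx in v_neq0.
  - by rewrite k_def k1 mulN1r.
have e : (u + 2 * v) ^+ 2 = p%:Z + 2 * (u + v) ^+ 2.
  by rewrite -[p%:Z]opprK -norm_uv; ring.
have uv_sum_neq0 : u + v != 0.
  by apply: contraTneq v2_lt => uv0; rewrite (_ : u = - v) ?sqrrN in norm_uv; lia.
exists (absz (u + 2 * v)), (absz (u + v)); rewrite !absz_gt0 uv_sum_neq0 -!abszX e.
have := sqr_ge0 (u + v); split=> //; lia.
Qed.

Lemma Fp_root_sqrt2_8 {z : 'F_p} {a b : int} : z ^+ 4 = -1 ->
  a ^+ 2 - 2 * b ^+ 2 = p%:Z ->
  exists2 w : 'F_p, w ^+ 4 = -1 & ev8 w (a%:~R + b%:~R * sqrt2_8) = 0.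
Proof.
move=> z4 nab; have /eqP := ev8_sqrt2_8_opp z4 a b.
rewrite nab -pmulrn pchar_Fp_0 // mulf_eq0 -(ev8_sqrt2_8 (- z)).
case/orP=> /eqP; first by exists z.
by exists (- z); rewrite // (exprM _ 2 2) sqrrN -exprM.
Qed.

End PrimeField.

(** * The prime of Z[zeta8] above p *)

Section PrimeAbove.
Context {p : nat} {z : 'F_p} (p_pr : prime p) (p_gt2 : (2 < p)%N) (z4 : z ^+ 4 = -1).

Lemma ev8_zeta_sub_lift : ev8 z (zeta - (z : nat)%:R) = 0.
Proof. by rewrite raddfB /= raddfMn /= ev8_zeta ev8_1 natr_Zp subrr. Qed.

Lemma ev8_aut8_7_zeta_sub_lift : ev8 z (aut8 7 (zeta - (z : nat)%:R)) != 0.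
Proof.
rewrite ev8_aut8 // raddfB /= raddfMn /= ev8_zeta ev8_1 natr_Zp.
have -> : z ^+ 7 - z = - (z * (z ^+ 2 + 1)) by rewrite (exprD _ 4 3) z4; ring.
rewrite oppr_eq0 mulf_eq0 negb_or; apply/andP; split.
  apply/eqP=> z0; move: z4; rewrite z0 expr0n /= => /eqP.
  by rewrite eq_sym oppr_eq0 oner_eq0.
rewrite addr_eq0; apply/eqP=> z2; move: z4; rewrite (exprM z 2 2) z2 sqrrN expr1n.
move/eqP; rewrite -subr_eq0 opprK -mulr2n -(dvdn_pcharf (pchar_Fp p_pr)).
by rewrite gtnNdvd.
Qed.

Lemma exists_norm8_eq_prime {x : cyc8} :
  norm8 x = p%:Z ^+ 2 -> aut8 7 x = x -> ev8 z x = 0 ->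
  exists2 g, norm8 g = p%:Z & ev8 z g = 0.
Proof.
move=> n_x x_real x_z.
have [g [[u [v g_def]] [k1 x_def] [k2 t_def]]] := cyc8_bezout x (zeta - (z : nat)%:R).
have g_z : ev8 z g = 0.
  by rewrite g_def raddfD /= !(ev8M z4) x_z ev8_zeta_sub_lift !mul0r addr0.
have n_gk1 : norm8 g * norm8 k1 = p%:Z ^+ 2 by rewrite -norm8M -x_def.
have : (`|norm8 g| %| p ^ 2)%N.
  by apply/dvdnP; exists `|norm8 k1|%N; rewrite -abszM mulrC n_gk1 abszX absz_nat.
have n_g_ge0 := norm8_ge0 g.
case/(dvdn_pfactor _ _ p_pr) => -[|[|[|j]]] // _ n_g.
- have := ev8_adj8 z g z4; rewrite g_z mul0r (_ : norm8 g = 1); last by lia.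
  by move/eqP; rewrite eq_sym oner_eq0.
- by exists g => //; lia.
(* then x divides zeta - z, hence, being real, also aut8 7 (zeta - z), which does
   not vanish at z *)
have {}n_g : norm8 g = p%:Z ^+ 2.
  by rewrite -[norm8 g]gez0_abs // n_g -natz natrX natz.
have n_k1 : norm8 k1 = 1.
  have p2_neq0 : p%:Z ^+ 2 != 0 by rewrite expf_neq0 // lt0r_neq0 // ltz_nat prime_gt0.
  by apply: (mulfI p2_neq0); rewrite mulr1 -[in RHS]n_gk1 n_g.
have t_x : zeta - (z : nat)%:R = x * (adj8 k1 * k2).
  by rewrite t_def x_def mulrA -(mulrA g) mul_adj8 n_k1 mulr1.
by move: ev8_aut8_7_zeta_sub_lift; rewrite t_x aut8M // x_real ev8M // x_z mul0r eqxx.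
Qed.

Lemma ev8_sqrt2_8_congr {a b A B : int} :
  ev8 z (a%:~R + b%:~R * sqrt2_8) = 0 -> ev8 z (A%:~R + B%:~R * sqrt2_8) = 0 ->
  (p %| A * a - 2 * B * b)%Z /\ (p %| B * a - A * b)%Z.
Proof.
rewrite !ev8_sqrt2_8 => ab0 AB0.
have ea : a%:~R = - (b%:~R * (z - z ^+ 3)) :> 'F_p by apply/eqP; rewrite -addr_eq0 ab0.
have eA : A%:~R = - (B%:~R * (z - z ^+ 3)) :> 'F_p by apply/eqP; rewrite -addr_eq0 AB0.
rewrite !(dvdz_pcharf (pchar_Fp p_pr)) !intrB !intrM ea eA; split; apply/eqP; last by ring.
transitivity (B%:~R * b%:~R * ((z - z ^+ 3) ^+ 2 - 2) : 'F_p); first by ring.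
by rewrite sqrt2_of_X4 // subrr mulr0.
Qed.

Lemma relnorm8_surj {a b : int} : 0 < a -> a ^+ 2 - 2 * b ^+ 2 = p%:Z ->
  ev8 z (a%:~R + b%:~R * sqrt2_8) = 0 ->
  exists alpha, alpha * aut8 7 alpha = a%:~R + b%:~R * sqrt2_8.
Proof.
move=> a_gt0 nab root_ab.
have n_ab : norm8 (a%:~R + b%:~R * sqrt2_8) = p%:Z ^+ 2 by rewrite norm8_sqrt2_8 nab.
have [g n_g g_z] := exists_norm8_eq_prime n_ab (aut8_7_sqrt2_8 a b) root_ab.
have gg := mul_aut8_7 g.
move: n_g; rewrite /norm8; set A := relnorm0 g; set B := relnorm1 g => nAB.
have A_ge0 : 0 <= A by rewrite /A /relnorm0 !addr_ge0 ?sqr_ge0.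
have A_gt0 : 0 < A.
  rewrite lt_def A_ge0 andbT; apply/eqP => A0; move: nAB; rewrite A0 expr0n /=.
  by have := sqr_ge0 B; have := prime_gt0 p_pr; lia.
have root_AB : ev8 z (A%:~R + B%:~R * sqrt2_8) = 0 by rewrite -gg ev8M // g_z mul0r.
have [dv1 dv2] := ev8_sqrt2_8_congr root_ab root_AB.
have p_gt0 : 0 < p%:Z by rewrite ltz_nat prime_gt0.
have [e [f ->]] := sqrt2_assoc_sqr p_gt0 a_gt0 A_gt0 nab nAB dv1 dv2.
exists (g * (e%:~R + f%:~R * sqrt2_8)).
by rewrite aut8M // aut8_7_sqrt2_8 -gg; ring.
Qed.

End PrimeAbove.

(** * Complex embeddings *)

Lemma zeta8_sqr : zeta8 ^+ 2 = 'i.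
Proof.
have sqr_i : 'i ^+ 2 = -1 :> algC := sqrCi _.
by rewrite /zeta8 exprMn expr_div_n sqrtCK (sqrrD 1 'i) sqr_i; field.
Qed.

Lemma zeta8_X4 : zeta8 ^+ 4 = -1.
Proof. by rewrite (exprM _ 2 2) zeta8_sqr sqrCi. Qed.

Lemma zeta8_X8 : zeta8 ^+ 8 = 1.
Proof. by rewrite (exprM _ 4 2) zeta8_X4 sqrrN expr1n. Qed.

Lemma sqrt2E : sqrt2 = zeta8 - zeta8 ^+ 3.
Proof. by rewrite /sqrt2 (exprD _ 4 3) zeta8_X4 mulN1r. Qed.

Lemma conj_zeta8 : zeta8^* = zeta8 ^+ 7.
Proof.
have sqr_i : 'i ^+ 2 = -1 :> algC := sqrCi _.
have real_r2 : (sqrtC 2 : algC)^* = sqrtC 2.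
  by apply/CrealP/ger0_real; rewrite sqrtC_ge0 ler0n.
have real_half : (2^-1 : algC)^* = 2^-1 by apply/CrealP/ger0_real; rewrite invr_ge0 ler0n.
rewrite (exprD _ 4 3) zeta8_X4 mulN1r exprS zeta8_sqr.
rewrite /zeta8 !rmorphM rmorphD rmorph1 /= conjCi real_r2 real_half.
transitivity (- (sqrtC 2 / 2 * ((1 + 'i) * 'i)) : algC); last by ring.
by rewrite mulrDl mul1r -expr2 sqr_i; ring.
Qed.

Lemma rmorph_ev8 {R S : comNzRingType} (f : {rmorphism R -> S}) (w : R) x :
  f (ev8 w x) = ev8 (f w) x.
Proof. by rewrite /ev8 !rmorphD !rmorphM !rmorph_int. Qed.

Lemma ev8_zeta8_mod8 i x : ev8 (zeta8 ^+ i) x = ev8 (zeta8 ^+ (i %% 8)) x.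
Proof. by rewrite {1}(divn_eq i 8) exprD mulnC exprM zeta8_X8 expr1n mul1r. Qed.

Definition coef8 (x : cyc8) : 'I_4 -> int :=
  fun k => [:: cf0 x; cf1 x; cf2 x; cf3 x]`_k.

Lemma sigma_coef8 i x : sigma i (coef8 x) = ev8 (zeta8 ^+ i) x.
Proof. by rewrite /sigma !big_ord_recl big_ord0 /ev8 /coef8 /bump /= !exprM; ring. Qed.

Lemma sigma_coef8_relnorm {alpha : cyc8} {a b : int} :
  alpha * aut8 7 alpha = a%:~R + b%:~R * sqrt2_8 ->
  let c := coef8 alpha in
  [/\ sigma 1 c * sigma 7 c = a%:~R + b%:~R * sqrt2,
      sigma 3 c * sigma 5 c = a%:~R - b%:~R * sqrt2 &
      canon_norm2 c = 2 * (sigma 1 c * sigma 7 c) + 2 * (sigma 3 c * sigma 5 c)].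
Proof.
move=> rel c.
have sigmaE i : sigma i c = ev8 zeta8 (aut8 i alpha).
  by rewrite sigma_coef8 ev8_aut8 // zeta8_X4.
have conjE i j : (7 * i = j %[mod 8])%N -> (sigma i c)^* = sigma j c.
  move=> ij; rewrite !sigma_coef8 rmorph_ev8 rmorphXn /= conj_zeta8 -exprM.
  by rewrite [LHS]ev8_zeta8_mod8 ij -ev8_zeta8_mod8.
split.
- by rewrite !sigmaE -ev8M ?zeta8_X4 // aut8_1 rel ev8_sqrt2_8 sqrt2E.
- rewrite !sigmaE -ev8M ?zeta8_X4 // -aut8_3_7 -aut8M // rel aut8_3_sqrt2_8.
  by rewrite ev8_sqrt2_8 sqrt2E intrN; ring.
rewrite /canon_norm2 !big_cons big_nil !normCK.
by rewrite (conjE 1 7) // (conjE 3 5) // (conjE 5 3) // (conjE 7 1) //; ring.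
Qed.

Theorem lemma4 (p : nat) :
  prime p -> (p = 1 %[mod 8])%N ->
  (exists a b : nat, (0 < a)%N /\ (0 < b)%N /\
     (p%:R : algC) = (a%:R + b%:R * sqrt2) * (a%:R - b%:R * sqrt2)) /\
  (forall a b : nat, (0 < a)%N -> (0 < b)%N ->
     (p%:R : algC) = (a%:R + b%:R * sqrt2) * (a%:R - b%:R * sqrt2) ->
     exists c : 'I_4 -> int,
       a%:R + b%:R * sqrt2 = sigma 1 c * sigma 7 c /\
       a%:R - b%:R * sqrt2 = sigma 3 c * sigma 5 c /\
       canon_norm2 c = 2 * (sigma 1 c * sigma 7 c) + 2 * (sigma 3 c * sigma 5 c) /\
       2 * (sigma 1 c * sigma 7 c) + 2 * (sigma 3 c * sigma 5 c) = 4 * a%:R).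
Proof.
move=> p_pr p_mod8.
have p_gt2 : (2 < p)%N by have := prime_gt1 p_pr; move: p_mod8; lia.
have [z z4] := exists_Fp_X4_eqN1 p_pr p_mod8.
have normE (a b : nat) : (a%:R + b%:R * sqrt2) * (a%:R - b%:R * sqrt2)
    = (a%:Z ^+ 2 - 2 * b%:Z ^+ 2)%:~R :> algC.
  transitivity (a%:R ^+ 2 - b%:R ^+ 2 * sqrt2 ^+ 2 : algC); first by ring.
  by rewrite sqrt2E (sqrt2_of_X4 zeta8_X4); ring.
split.
  have [a [b [a_gt0 b_gt0 ab]]] := sqrt2_mod_norm_form p_pr (sqrt2_of_X4 z4).
  exists a, b; do 2!split=> //; rewrite normE pmulrn.
  by congr (_%:~R); lia.
move=> a b a_gt0 b_gt0 p_ab.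
have nab : a%:Z ^+ 2 - 2 * b%:Z ^+ 2 = p%:Z.
  by apply: (@intr_inj algC); rewrite -normE -p_ab.
have [w w4 root] := Fp_root_sqrt2_8 p_pr z4 nab.
have [|alpha rel] := relnorm8_surj p_pr p_gt2 w4 _ nab root; first by rewrite ltz_nat.
have [s17 s35 cn] := sigma_coef8_relnorm rel.
by exists (coef8 alpha); rewrite cn s17 s35; do 3!split=> //; ring.
Qed.
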